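(* Let $G$ be a group, $j\colon K\to L$ a Dwyer $G$-map of $G$-posets, and $f\colon K\to X$ any map of $G$-posets, and form the pushout $Y=L\cup_K X$ in $G\mathbf{Cat}$. Then $Y$ is a $G$-poset, and for every subgroup $H\le G$ the square of $H$-fixed points $K^H\to X^H$, $K^H\to L^H$, $X^H\to Y^H$, $L^H\to Y^H$ is a pushout (in $\mathbf{Cat}$, equivalently in $\mathbf{Pos}$).
   Context: A subcategory $\mathcal{S}$ of $\mathcal{C}$ is a sieve if every morphism $c\to s$ with $s\in\mathcal{S}$ lies in $\mathcal{S}$ together with $c$; a cosieve dually. A Dwyer $G$-map is a $G$-functor that is the inclusion of a sieve and factors equivariantly as $\mathcal{S}\xrightarrow{i}\mathcal{T}\xrightarrow{j}\mathcal{C}$ with $j$ the inclusion of a cosieve and $i$ an inclusion with an equivariant right adjoint $r$ whose unit $\mathrm{id}\to r\circ i$ is the identity. Posets are regarded as categories; $X^H$ denotes the subposet of $H$-fixed elements. *)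

From Stdlib Require Import ProofIrrelevance Eqdep.

Set Implicit Arguments.
Unset Strict Implicit.

Record Cat := {
  Ob :> Type;
  Hom : Ob -> Ob -> Type;
  idm : forall x, Hom x x;
  cmp : forall x y z, Hom y z -> Hom x y -> Hom x z;
  cmp_id_l : forall x y (m : Hom x y), cmp (idm y) m = m;
  cmp_id_r : forall x y (m : Hom x y), cmp m (idm x) = m;
  cmp_assoc : forall x y z w (m1 : Hom x y) (m2 : Hom y z) (m3 : Hom z w),
      cmp m3 (cmp m2 m1) = cmp (cmp m3 m2) m1 }.
Arguments Hom {_} _ _.
Arguments idm {_} _.
Arguments cmp {_ _ _ _} _ _.

Definition Arr (C : Cat) := {p : Ob C * Ob C & Hom (fst p) (snd p)}.
Definition mkArr (C : Cat) (x y : C) (m : Hom x y) : Arr C :=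
  existT (fun p : Ob C * Ob C => Hom (fst p) (snd p)) (x, y) m.

Record Functor (C D : Cat) := {
  fo :> Ob C -> Ob D;
  fm : forall x y, Hom x y -> Hom (fo x) (fo y);
  fm_id : forall x, fm (idm x) = idm (fo x);
  fm_cmp : forall x y z (m1 : Hom x y) (m2 : Hom y z),
      fm (cmp m2 m1) = cmp (fm m2) (fm m1) }.
Arguments fm {C D} f {x y} _.

Definition arr (C D : Cat) (F : Functor C D) (a : Arr C) : Arr D :=
  mkArr (fm F (projT2 a)).

Definition feq (C D : Cat) (F F' : Functor C D) : Prop :=
  (forall x, F x = F' x) /\ (forall a, arr F a = arr F' a).

Definition idF (C : Cat) : Functor C C.
Proof.
  refine {| fo := fun x => x; fm := fun x y m => m |}; reflexivity.
Defined.

Definition compF (C D E : Cat) (F' : Functor D E) (F : Functor C D) : Functor C E.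
Proof.
  refine {| fo := fun x => F' (F x); fm := fun x y m => fm F' (fm F m) |}.
  - intros x. rewrite !fm_id. reflexivity.
  - intros. rewrite !fm_cmp. reflexivity.
Defined.

Definition is_poset (C : Cat) : Prop :=
  (forall (x y : C) (m1 m2 : Hom x y), m1 = m2) /\
  (forall x y : C, Hom x y -> Hom y x -> x = y).

Definition is_pushout (A B C D : Cat) (f : Functor A B) (g : Functor A C)
    (u : Functor B D) (v : Functor C D) : Prop :=
  feq (compF u f) (compF v g) /\
  forall (Z : Cat) (p : Functor B Z) (q : Functor C Z),
    feq (compF p f) (compF q g) ->
    exists w : Functor D Z,
      feq (compF w u) p /\ feq (compF w v) q /\
      forall w' : Functor D Z, feq (compF w' u) p -> feq (compF w' v) q -> feq w' w.

Record Group := {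
  gcar :> Type;
  gmul : gcar -> gcar -> gcar;
  gone : gcar;
  ginv : gcar -> gcar;
  gmulA : forall a b c, gmul a (gmul b c) = gmul (gmul a b) c;
  gmul1g : forall a, gmul gone a = a;
  gmulVg : forall a, gmul (ginv a) a = gone }.
Arguments gmul {_} _ _.
Arguments gone {_}.
Arguments ginv {_} _.

Definition is_subgroup (G : Group) (H : G -> Prop) : Prop :=
  H gone /\ (forall a b, H a -> H b -> H (gmul a b)) /\ (forall a, H a -> H (ginv a)).

Record GCat (G : Group) := {
  gc :> Cat;
  act : G -> Functor gc gc;
  act_one : feq (act gone) (idF gc);
  act_mul : forall g h, feq (act (gmul g h)) (compF (act g) (act h)) }.
Arguments act {_} _ _.

Definition equivariant (G : Group) (C D : GCat G) (F : Functor C D) : Prop :=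
  forall g : G, feq (compF F (act C g)) (compF (act D g) F).

Record GFunctor (G : Group) (C D : GCat G) := {
  gf :> Functor C D;
  gf_eqv : equivariant gf }.

Definition is_Gpushout (G : Group) (A B C D : GCat G) (f : GFunctor A B)
    (g : GFunctor A C) (u : GFunctor B D) (v : GFunctor C D) : Prop :=
  feq (compF u f) (compF v g) /\
  forall (Z : GCat G) (p : GFunctor B Z) (q : GFunctor C Z),
    feq (compF p f) (compF q g) ->
    exists w : GFunctor D Z,
      feq (compF w u) p /\ feq (compF w v) q /\
      forall w' : GFunctor D Z,
        feq (compF w' u) p -> feq (compF w' v) q -> feq w' w.

Definition injective_fun (A B : Type) (h : A -> B) := forall a b, h a = h b -> a = b.

Definition is_inclusion (C D : Cat) (F : Functor C D) : Prop :=
  injective_fun (fo F) /\ injective_fun (arr F).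

Definition sieve_inclusion (C D : Cat) (F : Functor C D) : Prop :=
  is_inclusion F /\
  forall (s : C) (c : D) (m : Hom c (F s)),
    exists (c' : C) (m' : Hom c' s), arr F (mkArr m') = mkArr m.

Definition cosieve_inclusion (C D : Cat) (F : Functor C D) : Prop :=
  is_inclusion F /\
  forall (s : C) (c : D) (m : Hom (F s) c),
    exists (c' : C) (m' : Hom s c'), arr F (mkArr m') = mkArr m.

Definition adjunction_with_unit (C D : Cat) (i : Functor C D) (r : Functor D C)
    (eta : forall x : C, Hom x (r (i x))) : Prop :=
  (forall (x x' : C) (m : Hom x x'), cmp (fm r (fm i m)) (eta x) = cmp (eta x') m) /\
  exists eps : forall y : D, Hom (i (r y)) y,
    (forall (y y' : D) (m : Hom y y'), cmp m (eps y) = cmp (eps y') (fm i (fm r m))) /\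
    (forall x : C, cmp (eps (i x)) (fm i (eta x)) = idm (i x)) /\
    (forall y : D, cmp (fm r (eps y)) (eta (r y)) = idm (r y)).

Definition dwyer_map (G : Group) (K L : GCat G) (j : GFunctor K L) : Prop :=
  sieve_inclusion j /\
  exists (T : GCat G) (i : GFunctor K T) (jj : GFunctor T L) (r : GFunctor T K)
         (eta : forall x : K, Hom x (r (i x))),
    feq (compF jj i) j /\
    cosieve_inclusion jj /\
    is_inclusion i /\
    @adjunction_with_unit K T i r eta /\
    (forall x : K, mkArr (eta x) = mkArr (idm x)).

Lemma sig_eq (A : Type) (P : A -> Prop) (a b : sig P) :
  proj1_sig a = proj1_sig b -> a = b.
Proof.
  destruct a as [a pa], b as [b pb]; simpl; intros E; subst b.
  f_equal; apply proof_irrelevance.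
Qed.

Lemma mkArr_cmp (C : Cat) (x y z x' y' z' : C) (a : Hom x' y') (b : Hom x y)
    (c : Hom y' z') (d : Hom y z) :
  mkArr a = mkArr b -> mkArr c = mkArr d -> mkArr (cmp c a) = mkArr (cmp d b).
Proof.
  intros E1 E2.
  assert (Ex : x' = x) by exact (f_equal (fun s : Arr C => fst (projT1 s)) E1).
  assert (Ey : y' = y) by exact (f_equal (fun s : Arr C => snd (projT1 s)) E1).
  assert (Ez : z' = z) by exact (f_equal (fun s : Arr C => snd (projT1 s)) E2).
  subst x' y' z'.
  apply inj_pair2 in E1. apply inj_pair2 in E2. subst a c. reflexivity.
Qed.

Section Fix.
Variables (G : Group) (C : GCat G) (H : G -> Prop).

Definition fixob := {x : Ob C | forall h, H h -> act C h x = x}.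
Definition fixhom (x y : fixob) :=
  {m : Hom (proj1_sig x) (proj1_sig y) |
     forall h, H h -> arr (act C h) (mkArr m) = mkArr m}.

Definition fixid (x : fixob) : fixhom x x.
Proof.
  exists (idm (proj1_sig x)). intros h Hh.
  unfold arr; simpl. rewrite fm_id.
  destruct x as [x px]; simpl. rewrite (px h Hh). reflexivity.
Defined.

Definition fixcmp (x y z : fixob) (m2 : fixhom y z) (m1 : fixhom x y) : fixhom x z.
Proof.
  exists (cmp (proj1_sig m2) (proj1_sig m1)). intros h Hh.
  unfold arr; simpl. rewrite fm_cmp.
  apply mkArr_cmp.
  - exact (proj2_sig m1 h Hh).
  - exact (proj2_sig m2 h Hh).
Defined.

Definition FixCat : Cat.
Proof.
  refine {| Ob := fixob; Hom := fixhom; idm := fixid; cmp := fixcmp |}.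
  - intros; apply sig_eq; simpl; apply cmp_id_l.
  - intros; apply sig_eq; simpl; apply cmp_id_r.
  - intros; apply sig_eq; simpl; apply cmp_assoc.
Defined.
End Fix.

Notation "C ^^ H" := (FixCat C H) (at level 30).

Section FixF.
Variables (G : Group) (H : G -> Prop) (C D : GCat G) (F : GFunctor C D).

Definition fixF_ob (x : fixob C H) : fixob D H.
Proof.
  exists (F (proj1_sig x)). intros h Hh. destruct x as [x px]; simpl.
  pose proof (proj1 (gf_eqv F h) x) as E. simpl in E.
  rewrite <- E. rewrite (px h Hh). reflexivity.
Defined.

Definition fixF_hom (x y : fixob C H) (m : fixhom x y) : fixhom (fixF_ob x) (fixF_ob y).
Proof.
  exists (fm F (proj1_sig m)). intros h Hh. destruct m as [m pm]; simpl.
  pose proof (proj2 (gf_eqv F h) (mkArr m)) as E.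
  change (arr (compF (act D h) F) (mkArr m) = arr F (mkArr m)).
  rewrite <- E. change (arr F (arr (act C h) (mkArr m)) = arr F (mkArr m)).
  rewrite (pm h Hh). reflexivity.
Defined.

Definition fixF : Functor (C ^^ H) (D ^^ H).
Proof.
  refine (@Build_Functor (C ^^ H) (D ^^ H) fixF_ob fixF_hom _ _).
  - intros x; apply sig_eq; simpl; apply fm_id.
  - intros; apply sig_eq; simpl; apply fm_cmp.
Defined.
End FixF.
Arguments fixF {G} H {C D} F.

(* Since [j] is a sieve and every element of [L] above [j(K)] lies in the cosieve
   [jj(T)], where [r t] is the largest element of [K] below [jj t], the pushout of posets
   can be written down: its elements are those of [X] and those of [L] outside [j(K)],
   each part ordered as before, with [x <= l] iff [x <= f (r t)] for the [t] with
   [jj t = l], and never [l <= x].  This poset is a pushout in Cat; the actions on [X]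
   and [L] induce one on it that makes it the pushout in GCat, so [Y] is isomorphic to it
   and thus a poset.  The construction only involves the order and restricts to fixed
   points, so the glued poset of the H-fixed data is the H-fixed subposet of the glued
   poset. *)

From Stdlib Require Import ProofIrrelevance Eqdep ClassicalEpsilon Setoid Morphisms.

Set Implicit Arguments.
Unset Strict Implicit.

Definition le (C : Cat) (a b : C) : Prop := inhabited (Hom a b).

Definition pick (A : Type) (h : inhabited A) : A := epsilon h (fun _ => True).

Definition thin (C : Cat) : Prop := forall (x y : C) (m1 m2 : Hom x y), m1 = m2.

Lemma thin_poset (C : Cat) : is_poset C -> thin C.
Proof. intros [thinC _]; exact thinC. Qed.

Lemma le_refl (C : Cat) (a : C) : le a a.
Proof. exact (inhabits (idm a)). Qed.

Lemma le_trans (C : Cat) (a b c : C) : le a b -> le b c -> le a c.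
Proof. intros [m1] [m2]; exact (inhabits (cmp m2 m1)). Qed.

Lemma le_map (C D : Cat) (F : Functor C D) (a b : C) : le a b -> le (F a) (F b).
Proof. intros [m]; exact (inhabits (fm F m)). Qed.

Lemma le_anti (C : Cat) (a b : C) : is_poset C -> le a b -> le b a -> a = b.
Proof. intros [_ anti] [m1] [m2]; exact (anti _ _ m1 m2). Qed.

Lemma mkArr_inj (C : Cat) (a b : C) (m m' : Hom a b) : mkArr m = mkArr m' -> m = m'.
Proof. exact (@inj_pair2 _ (fun p : Ob C * Ob C => Hom (fst p) (snd p)) _ _ _). Qed.

Lemma mkArr_thin (C : Cat) (a b a' b' : C) (m : Hom a b) (m' : Hom a' b') :
  thin C -> a = a' -> b = b' -> mkArr m = mkArr m'.
Proof. intros thinC -> ->; rewrite (thinC _ _ m m'); reflexivity. Qed.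
Arguments mkArr_thin {C a b a' b' m m'}.

Lemma arr_mkArr (C D : Cat) (F : Functor C D) (a b : C) (m : Hom a b) :
  arr F (mkArr m) = mkArr (fm F m).
Proof. reflexivity. Qed.

Definition castid (C : Cat) (a b : C) (E : a = b) : Hom a b :=
  match E in _ = y return Hom a y with eq_refl => idm a end.

Lemma mkArr_castid_l (C : Cat) (a b c : C) (E : b = c) (g : Hom a b) :
  mkArr (cmp (castid E) g) = mkArr g.
Proof. destruct E; simpl; rewrite cmp_id_l; reflexivity. Qed.

Lemma mkArr_castid_r (C : Cat) (a b c : C) (E : a = b) (g : Hom b c) :
  mkArr (cmp g (castid E)) = mkArr g.
Proof. destruct E; simpl; rewrite cmp_id_r; reflexivity. Qed.

Lemma fm_castid (C D : Cat) (F : Functor C D) (a b : C) (E : a = b) :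
  fm F (castid E) = castid (f_equal (fo F) E).
Proof. destruct E; apply fm_id. Qed.

Lemma feq_refl (C D : Cat) (F : Functor C D) : feq F F.
Proof. split; reflexivity. Qed.

Lemma feq_sym (C D : Cat) (F F' : Functor C D) : feq F F' -> feq F' F.
Proof. intros [Eo Ea]; split; intros; symmetry; auto. Qed.

Lemma feq_trans (C D : Cat) (F F' F'' : Functor C D) : feq F F' -> feq F' F'' -> feq F F''.
Proof. intros [Eo Ea] [Eo' Ea']; split; intros; etransitivity; eauto. Qed.

Add Parametric Relation (C D : Cat) : (Functor C D) (@feq C D)
  reflexivity proved by (@feq_refl C D)
  symmetry proved by (@feq_sym C D)
  transitivity proved by (@feq_trans C D) as feq_rel.

Add Parametric Morphism (C D E : Cat) : (@compF C D E)
  with signature (@feq D E) ==> (@feq C D) ==> (@feq C E) as compF_feq.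
Proof.
  intros F F' [Eo Ea] F1 F1' [Eo1 Ea1]; split.
  - intros x; simpl; rewrite Eo1; apply Eo.
  - intros a; change (arr F (arr F1 a) = arr F' (arr F1' a)); rewrite Ea1; apply Ea.
Qed.

Lemma compFA (A B C D : Cat) (F : Functor C D) (F' : Functor B C) (F'' : Functor A B) :
  feq (compF (compF F F') F'') (compF F (compF F' F'')).
Proof. split; reflexivity. Qed.

Lemma compF_idl (C D : Cat) (F : Functor C D) : feq (compF (idF D) F) F.
Proof. split; reflexivity. Qed.

Lemma compF_idr (C D : Cat) (F : Functor C D) : feq (compF F (idF C)) F.
Proof. split; reflexivity. Qed.

Lemma feq_thin (C D : Cat) (F F' : Functor C D) :
  thin D -> (forall x, F x = F' x) -> feq F F'.
Proof. intros thinD Eo; split; auto; intros [[x y] m]; apply mkArr_thin; auto. Qed.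

Definition thin_functor (C D : Cat) (thinD : thin D) (o : C -> D)
    (mo : forall x y, Hom x y -> Hom (o x) (o y)) : Functor C D.
Proof. refine {| fo := o; fm := mo |}; intros; apply thinD. Defined.
Arguments thin_functor {C D} thinD o mo.

Lemma poset_retract (C D : Cat) (F : Functor C D) (R : Functor D C) :
  feq (compF R F) (idF C) -> is_poset D -> is_poset C.
Proof.
  intros [Eo Ea] [thinD anti]; split.
  - intros x y m1 m2; apply mkArr_inj.
    change (arr (idF C) (mkArr m1) = arr (idF C) (mkArr m2)); rewrite <- !Ea.
    change (arr R (arr F (mkArr m1)) = arr R (arr F (mkArr m2))).
    f_equal; apply mkArr_thin; auto.
  - intros x y m1 m2; transitivity (R (F x)); [symmetry; exact (Eo x)|].
    transitivity (R (F y)); [|exact (Eo y)].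
    f_equal; exact (anti _ _ (fm F m1) (fm F m2)).
Qed.

Lemma pushout_transfer (A B C D D' : Cat) (a : Functor A B) (b : Functor A C)
    (u : Functor B D) (v : Functor C D) (u' : Functor B D') (v' : Functor C D')
    (phi : Functor D D') (psi : Functor D' D) :
  feq (compF psi phi) (idF D) -> feq (compF phi psi) (idF D') ->
  feq (compF phi u) u' -> feq (compF phi v) v' ->
  is_pushout a b u v -> is_pushout a b u' v'.
Proof.
  intros Epp Epp' Eu Ev [Hc Hu]; split.
  - rewrite <- Eu, <- Ev, !compFA, Hc; reflexivity.
  - intros Z p q Hpq; destruct (Hu Z p q Hpq) as [w [Hw1 [Hw2 Hw3]]].
    exists (compF w psi); split; [|split].
    + rewrite <- Eu, compFA, <- (compFA psi phi u), Epp, compF_idl; exact Hw1.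
    + rewrite <- Ev, compFA, <- (compFA psi phi v), Epp, compF_idl; exact Hw2.
    + intros w' Hw'1 Hw'2.
      assert (E : feq (compF w' phi) w).
      { apply Hw3; [rewrite compFA, Eu | rewrite compFA, Ev]; assumption. }
      rewrite <- E, compFA, Epp'; symmetry; apply compF_idr.
Qed.

Lemma equivariant_ob (G : Group) (C D : GCat G) (F : GFunctor C D) g x :
  F (act C g x) = act D g (F x).
Proof. exact (proj1 (gf_eqv F g) x). Qed.

Lemma act_invK (G : Group) (C : GCat G) g x : act C (ginv g) (act C g x) = x.
Proof.
  transitivity (act C (gmul (ginv g) g) x).
  - symmetry; exact (proj1 (act_mul C (ginv g) g) x).
  - rewrite gmulVg; exact (proj1 (act_one C) x).
Qed.

Definition gcompF (G : Group) (A B C : GCat G) (F' : GFunctor B C) (F : GFunctor A B) :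
  GFunctor A C.
Proof.
  refine {| gf := compF F' F |}; intro g.
  rewrite compFA, (gf_eqv F g), <- compFA, (gf_eqv F' g); apply compFA.
Defined.

Definition gidF (G : Group) (A : GCat G) : GFunctor A A.
Proof. refine {| gf := idF A |}; intro g; split; reflexivity. Defined.

(* The mediating functor of a pushout of G-functors is equivariant, because
   twisting it by [g] on either side mediates the same twisted cocone. *)
Lemma Gpushout_of_pushout (G : Group) (A B C D : GCat G) (f : GFunctor A B)
    (g : GFunctor A C) (u : GFunctor B D) (v : GFunctor C D) :
  is_pushout f g u v -> is_Gpushout f g u v.
Proof.
  intros [Hc Hu]; split; [exact Hc|].
  intros Z p q Hpq; destruct (Hu Z p q Hpq) as [w [Hwu [Hwv Hw]]].
  assert (w_eqv : equivariant w).
  { intro g0.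
    assert (Hpq0 : feq (compF (compF (act Z g0) p) f) (compF (compF (act Z g0) q) g)).
    { rewrite !compFA, Hpq; reflexivity. }
    destruct (Hu Z _ _ Hpq0) as [w0 [_ [_ Hw0]]].
    transitivity w0; [|symmetry]; apply Hw0.
    - rewrite compFA, <- (gf_eqv u g0), <- compFA, Hwu; apply (gf_eqv p g0).
    - rewrite compFA, <- (gf_eqv v g0), <- compFA, Hwv; apply (gf_eqv q g0).
    - rewrite compFA, Hwu; reflexivity.
    - rewrite compFA, Hwv; reflexivity. }
  exists (Build_GFunctor w_eqv); split; [exact Hwu|split; [exact Hwv|]].
  intros w'; apply Hw.
Qed.

Lemma Gpushout_endo_id (G : Group) (A B C D : GCat G) (f : GFunctor A B) (g : GFunctor A C)
    (u : GFunctor B D) (v : GFunctor C D) (w : GFunctor D D) :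
  is_Gpushout f g u v -> feq (compF w u) u -> feq (compF w v) v -> feq w (idF D).
Proof.
  intros [Hc Hu] Ewu Ewv; destruct (Hu D u v Hc) as [w0 [_ [_ Hw0]]].
  transitivity (gf w0); [apply Hw0; assumption|].
  symmetry; apply (Hw0 (gidF D)); apply compF_idl.
Qed.

Lemma Gpushout_iso (G : Group) (A B C D D' : GCat G) (f : GFunctor A B) (g : GFunctor A C)
    (u : GFunctor B D) (v : GFunctor C D) (u' : GFunctor B D') (v' : GFunctor C D') :
  is_Gpushout f g u v -> is_Gpushout f g u' v' ->
  exists (phi : GFunctor D D') (psi : GFunctor D' D),
    feq (compF psi phi) (idF D) /\ feq (compF phi psi) (idF D') /\
    feq (compF phi u) u' /\ feq (compF phi v) v'.
Proof.
  intros HD HD'.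
  destruct (proj2 HD D' u' v' (proj1 HD')) as [phi [Hpu [Hpv _]]].
  destruct (proj2 HD' D u v (proj1 HD)) as [psi [Hqu [Hqv _]]].
  exists phi, psi; split; [|split; [|split; assumption]].
  - apply (Gpushout_endo_id (w := gcompF psi phi) HD); simpl.
    + rewrite compFA, Hpu; exact Hqu.
    + rewrite compFA, Hpv; exact Hqv.
  - apply (Gpushout_endo_id (w := gcompF phi psi) HD'); simpl.
    + rewrite compFA, Hqu; exact Hpu.
    + rewrite compFA, Hqv; exact Hpv.
Qed.

Section FixedPoints.
Variables (G : Group) (H : G -> Prop).

Lemma fix_poset (C : GCat G) : is_poset C -> is_poset (C ^^ H).
Proof.
  intros [thinC anti]; split.
  - intros x y m1 m2; apply sig_eq; apply thinC.
  - intros x y m1 m2; apply sig_eq; exact (anti _ _ (proj1_sig m1) (proj1_sig m2)).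
Qed.

Definition fix_hom_of (C : GCat G) (thinC : thin C) (x y : C ^^ H)
    (m : Hom (proj1_sig x) (proj1_sig y)) : Hom x y.
Proof.
  exists m; intros h Hh; apply mkArr_thin; [exact thinC | |].
  - exact (proj2_sig x h Hh).
  - exact (proj2_sig y h Hh).
Defined.

Lemma fix_le (C : GCat G) (x y : C ^^ H) :
  thin C -> le (proj1_sig x) (proj1_sig y) -> le x y.
Proof. intros thinC [m]; exact (inhabits (fix_hom_of thinC m)). Qed.

Lemma le_unfix (C : GCat G) (x y : C ^^ H) : le x y -> le (proj1_sig x) (proj1_sig y).
Proof. intros [m]; exact (inhabits (proj1_sig m)). Qed.

Lemma fixed_of_inj (A B : GCat G) (F : GFunctor A B) (a : A) :
  injective_fun F -> (forall h, H h -> act B h (F a) = F a) -> forall h, H h -> act A h a = a.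
Proof. intros injF Fa h Hh; apply injF; rewrite (equivariant_ob F); exact (Fa h Hh). Qed.

Lemma feq_fix (C D : GCat G) (F F' : Functor (C ^^ H) (D ^^ H)) :
  is_poset D -> (forall x, proj1_sig (F x) = proj1_sig (F' x)) -> feq F F'.
Proof.
  intros pD E; apply feq_thin; [exact (thin_poset (fix_poset pD))|].
  intro x; apply sig_eq; apply E.
Qed.

Lemma fix_pushout_transfer (A B C D D' : GCat G) (f : GFunctor A B) (g : GFunctor A C)
    (u : GFunctor B D) (v : GFunctor C D) (u' : GFunctor B D') (v' : GFunctor C D')
    (phi : GFunctor D D') (psi : GFunctor D' D) :
  is_poset D -> is_poset D' ->
  feq (compF psi phi) (idF D) -> feq (compF phi psi) (idF D') ->
  feq (compF phi u) u' -> feq (compF phi v) v' ->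
  is_pushout (fixF H f) (fixF H g) (fixF H u) (fixF H v) ->
  is_pushout (fixF H f) (fixF H g) (fixF H u') (fixF H v').
Proof.
  intros pD pD' Epp Epp' Eu Ev.
  apply (pushout_transfer (phi := fixF H phi) (psi := fixF H psi));
    apply feq_fix; auto; intro x; simpl.
  - exact (proj1 Epp _).
  - exact (proj1 Epp' _).
  - exact (proj1 Eu _).
  - exact (proj1 Ev _).
Qed.
End FixedPoints.

Record poset_dwyer (K L T : Cat) (j : Functor K L) (i : Functor K T)
    (jj : Functor T L) (r : Functor T K) : Prop := {
  jj_i : forall k, jj (i k) = j k;
  r_i : forall k, r (i k) = k;
  i_r_le : forall t, le (i (r t)) t;
  jj_inj : forall t t', jj t = jj t' -> t = t';
  jj_le_reflect : forall t t', le (jj t) (jj t') -> le t t';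
  j_sieve : forall k l, le l (j k) -> exists k', j k' = l;
  jj_cosieve : forall t l, le (jj t) l -> exists t', jj t' = l }.

Section Glue.
Variables (K L X T : Cat) (j : Functor K L) (f : Functor K X)
  (i : Functor K T) (jj : Functor T L) (r : Functor T K).
Hypotheses (pL : is_poset L) (pX : is_poset X) (D : poset_dwyer j i jj r).

Lemma j_inj k k' : j k = j k' -> k = k'.
Proof.
  rewrite <- !(jj_i D); intro E; apply (jj_inj D) in E.
  rewrite <- (r_i D k), <- (r_i D k'), E; reflexivity.
Qed.

Lemma j_le_jj k t : le (j k) (jj t) <-> le k (r t).
Proof.
  split; intro Hle.
  - rewrite <- (jj_i D) in Hle; apply (jj_le_reflect D), (le_map r) in Hle.
    rewrite (r_i D) in Hle; exact Hle.
  - rewrite <- (jj_i D); apply le_map.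
    exact (le_trans (le_map i Hle) (i_r_le D t)).
Qed.

Lemma j_le_reflect k k' : le (j k) (j k') -> le k k'.
Proof. rewrite <- (jj_i D k'), j_le_jj, (r_i D); trivial. Qed.

Lemma j_r_le t l : jj t = l -> le (j (r t)) l.
Proof. intros <-; apply j_le_jj, le_refl. Qed.

Definition notin_K (l : L) : Prop := ~ exists k, j k = l.

Definition glue_ob : Type := (X + {l : L | notin_K l})%type.

Definition glue_le (a b : glue_ob) : Prop :=
  match a, b with
  | inl x, inl x' => le x x'
  | inr l, inr l' => le (proj1_sig l) (proj1_sig l')
  | inl x, inr l => exists t, jj t = proj1_sig l /\ le x (f (r t))
  | inr _, inl _ => False
  end.

Lemma glue_le_refl a : glue_le a a.
Proof. destruct a; apply le_refl. Qed.

Lemma glue_le_trans a b c : glue_le a b -> glue_le b c -> glue_le a c.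
Proof.
  destruct a as [x|l], b as [y|l'], c as [z|l'']; simpl; try tauto.
  - apply le_trans.
  - intros Hxy [t [Et Ht]]; exists t; split; [exact Et | exact (le_trans Hxy Ht)].
  - intros [t [Et Ht]] Hll'; rewrite <- Et in Hll'.
    destruct (jj_cosieve D Hll') as [t' Et'].
    exists t'; split; [exact Et'|]; apply (le_trans Ht).
    apply le_map, le_map, (jj_le_reflect D); rewrite Et'; exact Hll'.
  - apply le_trans.
Qed.

Definition GlueCat : Cat.
Proof.
  refine {| Ob := glue_ob; Hom := glue_le; idm := glue_le_refl;
            cmp := fun a b c m2 m1 => glue_le_trans m1 m2 |};
    intros; apply (proof_irrelevance (glue_le _ _)).
Defined.

Lemma glue_thin : thin GlueCat.
Proof. intros a b m1 m2; apply (proof_irrelevance (glue_le a b)). Qed.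

Lemma glue_poset : is_poset GlueCat.
Proof.
  split; [exact glue_thin|].
  intros [x|[l Hl]] [y|[l' Hl']]; simpl; try tauto; intros H1 H2.
  - f_equal; exact (le_anti pX H1 H2).
  - f_equal; apply sig_eq; exact (le_anti pL H1 H2).
Qed.

Definition glue_L_ob (l : L) : glue_ob :=
  match excluded_middle_informative (exists k, j k = l) with
  | left Hl => inl (f (proj1_sig (constructive_indefinite_description _ Hl)))
  | right Hl => inr (exist _ l Hl)
  end.

Lemma glue_L_ob_j k : glue_L_ob (j k) = inl (f k).
Proof.
  unfold glue_L_ob; destruct (excluded_middle_informative _) as [Hl|Hl].
  - destruct (constructive_indefinite_description _ Hl) as [k' Ek]; simpl.
    rewrite (j_inj Ek); reflexivity.
  - exfalso; apply Hl; exists k; reflexivity.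
Qed.

Lemma glue_L_ob_notin l (Hl : notin_K l) : glue_L_ob l = inr (exist _ l Hl).
Proof.
  unfold glue_L_ob; destruct (excluded_middle_informative _) as [Hl'|Hl'].
  - contradiction.
  - f_equal; apply sig_eq; reflexivity.
Qed.

Lemma glue_L_ob_cases l :
  (exists k, j k = l /\ glue_L_ob l = inl (f k)) \/
  (exists Hl : notin_K l, glue_L_ob l = inr (exist _ l Hl)).
Proof.
  destruct (excluded_middle_informative (exists k, j k = l)) as [[k <-]|Hl].
  - left; exists k; split; [reflexivity | apply glue_L_ob_j].
  - right; exists Hl; apply glue_L_ob_notin.
Qed.

Lemma glue_L_mono (l l' : L) : Hom l l' -> glue_le (glue_L_ob l) (glue_L_ob l').
Proof.
  intro m.
  destruct (glue_L_ob_cases l) as [[k [<- ->]]|[Hl ->]];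
    destruct (glue_L_ob_cases l') as [[k' [<- ->]]|[Hl' ->]]; simpl.
  - apply le_map, j_le_reflect; exact (inhabits m).
  - destruct (@jj_cosieve _ _ _ _ _ _ _ D (i k) l') as [t Et].
    { rewrite (jj_i D); exact (inhabits m). }
    exists t; split; [exact Et|].
    apply le_map, j_le_jj; rewrite Et; exact (inhabits m).
  - apply Hl, (j_sieve D (k := k')); exact (inhabits m).
  - exact (inhabits m).
Qed.

Definition glue_L : Functor L GlueCat := thin_functor glue_thin glue_L_ob glue_L_mono.

Definition glue_X : Functor X GlueCat :=
  thin_functor glue_thin (fun x => inl x) (fun x y m => inhabits m).

Lemma glue_square : feq (compF glue_L j) (compF glue_X f).
Proof. apply feq_thin; [exact glue_thin | intro k; apply glue_L_ob_j]. Qed.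

Section Universal.
Variables (Z : Cat) (p : Functor L Z) (q : Functor X Z).
Hypothesis Hpq : feq (compF p j) (compF q f).

Definition pq_ob k : q (f k) = p (j k) := eq_sym (proj1 Hpq k).

(* The arrow [q x -> p l] that the cocone forces through [f k = j k]; the cast
   bridges the object equation [q (f k) = p (j k)]. *)
Definition cross x l k (h1 : le x (f k)) (h2 : le (j k) l) : Hom (q x) (p l) :=
  cmp (fm p (pick h2)) (cmp (castid (pq_ob k)) (fm q (pick h1))).

Lemma cross_natural k k' (m : Hom k k') :
  cmp (fm p (fm j m)) (castid (pq_ob k)) = cmp (castid (pq_ob k')) (fm q (fm f m)).
Proof.
  apply mkArr_inj; rewrite mkArr_castid_r, mkArr_castid_l.
  exact (proj2 Hpq (mkArr m)).
Qed.

Lemma cross_le x l k k' (Hk : le k k') h1 h2 h1' h2' :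
  @cross x l k h1 h2 = @cross x l k' h1' h2'.
Proof.
  unfold cross; set (m := pick Hk).
  assert (E1 : pick h1' = cmp (fm f m) (pick h1)) by apply (thin_poset pX).
  assert (E2 : pick h2 = cmp (pick h2') (fm j m)) by apply (thin_poset pL).
  rewrite E1, E2, !fm_cmp, <- !cmp_assoc; f_equal.
  rewrite !cmp_assoc; f_equal; apply cross_natural.
Qed.

(* Any two intermediate [k] lie below [r t], where [jj t = l]. *)
Lemma cross_indep x l k k' h1 h2 h1' h2' :
  @cross x l k h1 h2 = @cross x l k' h1' h2'.
Proof.
  destruct (@jj_cosieve _ _ _ _ _ _ _ D (i k) l) as [t Et].
  { rewrite (jj_i D); exact h2. }
  assert (Hk : le k (r t)) by (apply j_le_jj; rewrite Et; exact h2).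
  assert (Hk' : le k' (r t)) by (apply j_le_jj; rewrite Et; exact h2').
  assert (hx : le x (f (r t))) by exact (le_trans h1 (le_map f Hk)).
  rewrite (cross_le Hk h1 h2 hx (j_r_le Et)), (cross_le Hk' h1' h2' hx (j_r_le Et)).
  reflexivity.
Qed.

Definition glue_cross x (l : L) (H : exists t, jj t = l /\ le x (f (r t))) :
    Hom (q x) (p l) :=
  let (t, Ht) := constructive_indefinite_description _ H in
  @cross x l (r t) (proj2 Ht) (j_r_le (proj1 Ht)).

Lemma glue_crossE x l H k h1 h2 : @glue_cross x l H = @cross x l k h1 h2.
Proof.
  unfold glue_cross; destruct (constructive_indefinite_description _ H); apply cross_indep.
Qed.

Lemma cross_cmp_q x y l k (m : Hom x y) h1 h2 h1' :
  cmp (@cross y l k h1 h2) (fm q m) = @cross x l k h1' h2.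
Proof.
  unfold cross; rewrite <- !cmp_assoc, <- fm_cmp.
  rewrite ((thin_poset pX) _ _ (cmp (pick h1) m) (pick h1')); reflexivity.
Qed.

Lemma cross_cmp_p x l l' k (m : Hom l l') h1 h2 h2' :
  cmp (fm p m) (@cross x l k h1 h2) = @cross x l' k h1 h2'.
Proof.
  unfold cross; rewrite !cmp_assoc, <- fm_cmp.
  rewrite ((thin_poset pL) _ _ (cmp m (pick h2)) (pick h2')); reflexivity.
Qed.

Definition lift_ob (a : glue_ob) : Z :=
  match a with inl x => q x | inr l => p (proj1_sig l) end.

Definition lift_hom (a b : glue_ob) : glue_le a b -> Hom (lift_ob a) (lift_ob b) :=
  match a, b return glue_le a b -> Hom (lift_ob a) (lift_ob b) with
  | inl x, inl x' => fun H => fm q (pick H)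
  | inr l, inr l' => fun H => fm p (pick H)
  | inl x, inr l => fun H => glue_cross H
  | inr l, inl x => fun H => False_rect _ H
  end.

Definition glue_lift : Functor GlueCat Z.
Proof.
  refine (@Build_Functor GlueCat Z lift_ob lift_hom _ _).
  - intros [x|l]; simpl.
    + rewrite ((thin_poset pX) _ _ (pick _) (idm x)); apply fm_id.
    + rewrite ((thin_poset pL) _ _ (pick _) (idm _)); apply fm_id.
  - intros [x|l] [y|l'] [z|l''] m1 m2; simpl in *; try contradiction.
    + rewrite <- fm_cmp; f_equal; apply (thin_poset pX).
    + pose proof m2 as [t [Et Ht]]; pose proof (j_r_le Et) as h2.
      rewrite (glue_crossE m2 Ht h2), (glue_crossE _ (le_trans m1 Ht) h2).
      symmetry; apply cross_cmp_q.
    + pose proof m1 as [t [Et Ht]]; pose proof (j_r_le Et) as h2.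
      rewrite (glue_crossE m1 Ht h2), (glue_crossE _ Ht (le_trans h2 m2)).
      symmetry; apply cross_cmp_p.
    + rewrite <- fm_cmp; f_equal; apply (thin_poset pL).
Defined.

Lemma glue_lift_X : feq (compF glue_lift glue_X) q.
Proof.
  split; [reflexivity|].
  intros [[x y] m]; unfold arr; simpl.
  rewrite ((thin_poset pX) _ _ (pick _) m); reflexivity.
Qed.

Lemma glue_lift_L : feq (compF glue_lift glue_L) p.
Proof.
  split.
  - intros l; simpl.
    destruct (glue_L_ob_cases l) as [[k [<- ->]]|[Hl ->]]; simpl;
      [apply pq_ob | reflexivity].
  - intros [[l l'] m]; simpl in m.
    change (mkArr (lift_hom (glue_L_mono m)) = mkArr (fm p m)).
    generalize (glue_L_mono m).
    destruct (glue_L_ob_cases l) as [[k [<- ->]]|[Hl ->]];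
      destruct (glue_L_ob_cases l') as [[k' [<- ->]]|[Hl' ->]]; simpl in *; intro Hle.
    + set (mk := pick (j_le_reflect (inhabits m))).
      rewrite ((thin_poset pX) _ _ (pick Hle) (fm f mk)).
      change (arr (compF q f) (mkArr mk) = mkArr (fm p m)).
      rewrite <- (proj2 Hpq); unfold arr; simpl.
      rewrite ((thin_poset pL) _ _ (fm j mk) m); reflexivity.
    + rewrite (glue_crossE _ (le_refl (f k)) (inhabits m)); unfold cross.
      rewrite ((thin_poset pX) _ _ (pick _) (idm _)), fm_id, cmp_id_r.
      rewrite ((thin_poset pL) _ _ (pick _) m); apply mkArr_castid_r.
    + exfalso; apply Hl, (j_sieve D (k := k')); exact (inhabits m).
    + rewrite ((thin_poset pL) _ _ (pick Hle) m); reflexivity.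
Qed.

Lemma glue_cross_factor x l (Hl : notin_K l) t (Et : jj t = l) (Ht : le x (f (r t)))
    (m : @Hom GlueCat (inl x) (inr (exist _ l Hl))) :
  exists (E : glue_X (f (r t)) = glue_L (j (r t))),
    mkArr m =
    mkArr (cmp (fm glue_L (pick (j_r_le Et))) (cmp (castid E) (fm glue_X (pick Ht)))).
Proof.
  exists (eq_sym (glue_L_ob_j (r t))).
  apply mkArr_thin; [exact glue_thin | reflexivity | symmetry; apply glue_L_ob_notin].
Qed.

Lemma glue_lift_unique (w : Functor GlueCat Z) :
  feq (compF w glue_L) p -> feq (compF w glue_X) q -> feq w glue_lift.
Proof.
  intros Hu Hv; split.
  - intros [x|[l Hl]]; [exact (proj1 Hv x)|].
    transitivity (w (glue_L_ob l)); [|exact (proj1 Hu l)].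
    f_equal; symmetry; apply glue_L_ob_notin.
  - intros [[[x|[l Hl]] [x'|[l' Hl']]] Hab]; simpl in Hab.
    + transitivity (arr w (arr glue_X (mkArr (pick Hab)))).
      { f_equal; apply (mkArr_thin glue_thin); reflexivity. }
      exact (proj2 Hv (mkArr (pick Hab))).
    + pose proof Hab as [t [Et Ht]]; simpl in Et.
      destruct (@glue_cross_factor x l' Hl' t Et Ht Hab) as [E HE].
      change (arr w (@mkArr GlueCat (inl x) (inr (exist _ l' Hl')) Hab) =
              mkArr (@glue_cross x l' Hab)); rewrite HE.
      rewrite (glue_crossE _ Ht (j_r_le Et)), arr_mkArr; unfold cross.
      rewrite !fm_cmp, fm_castid; apply mkArr_cmp; [rewrite !mkArr_castid_l|].
      * exact (proj2 Hv (mkArr (pick Ht))).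
      * exact (proj2 Hu (mkArr (pick (j_r_le Et)))).
    + destruct Hab.
    + transitivity (arr w (arr glue_L (mkArr (pick Hab)))).
      { f_equal; apply (mkArr_thin glue_thin); symmetry; apply glue_L_ob_notin. }
      exact (proj2 Hu (mkArr (pick Hab))).
Qed.
End Universal.

Theorem glue_pushout : is_pushout j f glue_L glue_X.
Proof.
  split; [exact glue_square|].
  intros Z p q Hpq; exists (glue_lift Hpq).
  split; [apply glue_lift_L | split; [apply glue_lift_X|]].
  intros w Hu Hv; apply glue_lift_unique; assumption.
Qed.
End Glue.
Arguments glue_thin {K L X T j} f {i jj r} D x y m1 m2.

Section GlueAction.
Variables (G : Group) (K L X T : GCat G) (j : GFunctor K L) (f : GFunctor K X)
  (i : GFunctor K T) (jj : GFunctor T L) (r : GFunctor T K).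
Hypotheses (pL : is_poset L) (pX : is_poset X) (D : poset_dwyer j i jj r).

Lemma notin_K_act g l : notin_K j l -> notin_K j (act L g l).
Proof.
  intros Hl [k Ek]; apply Hl; exists (act K (ginv g) k).
  rewrite (equivariant_ob j), Ek; apply act_invK.
Qed.

Definition glue_act_ob (g : G) (a : glue_ob X j) : glue_ob X j :=
  match a with
  | inl x => inl (act X g x)
  | inr l => inr (exist _ (act L g (proj1_sig l)) (@notin_K_act g _ (proj2_sig l)))
  end.

Lemma glue_act_mono g a b :
  glue_le f jj r a b -> glue_le f jj r (glue_act_ob g a) (glue_act_ob g b).
Proof.
  destruct a as [x|[l Hl]], b as [y|[l' Hl']]; simpl; try tauto; try apply le_map.
  intros [t [Et Ht]]; exists (act T g t); split.
  - rewrite (equivariant_ob jj), Et; reflexivity.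
  - rewrite (equivariant_ob r), (equivariant_ob f); exact (le_map _ Ht).
Qed.

Definition glue_act (g : G) : Functor (GlueCat f D) (GlueCat f D) :=
  @thin_functor (GlueCat f D) _ (glue_thin f D) (glue_act_ob g)
    (fun a b m => glue_act_mono g m).

Definition GlueG : GCat G.
Proof.
  refine {| gc := GlueCat f D; act := glue_act |}.
  - apply feq_thin; [exact (glue_thin f D)|]; intros [x|[l Hl]]; simpl; f_equal.
    + exact (proj1 (act_one X) x).
    + apply sig_eq; exact (proj1 (act_one L) l).
  - intros g h; apply feq_thin; [exact (glue_thin f D)|]; intros [x|[l Hl]]; simpl; f_equal.
    + exact (proj1 (act_mul X g h) x).
    + apply sig_eq; exact (proj1 (act_mul L g h) l).
Defined.

Lemma GlueG_poset : is_poset GlueG.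
Proof. exact (glue_poset f pL pX D). Qed.

Lemma glue_L_equivariant : @equivariant G L GlueG (glue_L f D).
Proof.
  intro g; apply feq_thin; [exact (glue_thin f D)|]; intro l; simpl.
  destruct (glue_L_ob_cases f D l) as [[k [<- ->]]|[Hl ->]]; simpl.
  - rewrite <- (equivariant_ob j), (glue_L_ob_j f D), (equivariant_ob f); reflexivity.
  - rewrite (glue_L_ob_notin f (@notin_K_act g _ Hl)); reflexivity.
Qed.

Lemma glue_X_equivariant : @equivariant G X GlueG (glue_X f D).
Proof. intro g; apply feq_thin; [exact (glue_thin f D) | reflexivity]. Qed.

Definition glue_LG : GFunctor L GlueG := Build_GFunctor glue_L_equivariant.
Definition glue_XG : GFunctor X GlueG := Build_GFunctor glue_X_equivariant.

Lemma glue_Gpushout : is_Gpushout j f glue_LG glue_XG.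
Proof. apply Gpushout_of_pushout; exact (glue_pushout f pL pX D). Qed.
End GlueAction.

Section FixedDwyer.
Variables (G : Group) (H : G -> Prop) (K L T : GCat G)
  (j : GFunctor K L) (i : GFunctor K T) (jj : GFunctor T L) (r : GFunctor T K).
Hypotheses (pT : is_poset T) (D : poset_dwyer j i jj r).

Lemma fixed_j_preimage k (l : L ^^ H) : j k = proj1_sig l -> forall h, H h -> act K h k = k.
Proof.
  intro E; apply (fixed_of_inj (F := j)); [exact (j_inj D) | rewrite E; exact (proj2_sig l)].
Qed.

Lemma fixed_jj_preimage t (l : L ^^ H) : jj t = proj1_sig l -> forall h, H h -> act T h t = t.
Proof.
  intro E; apply (fixed_of_inj (F := jj)); [exact (jj_inj D) | rewrite E; exact (proj2_sig l)].
Qed.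

Lemma poset_dwyer_fix : poset_dwyer (fixF H j) (fixF H i) (fixF H jj) (fixF H r).
Proof.
  split.
  - intro k; apply sig_eq; apply (jj_i D).
  - intro k; apply sig_eq; apply (r_i D).
  - intro t; apply (fix_le (thin_poset pT)), (i_r_le D).
  - intros t t' E; apply sig_eq, (jj_inj D); exact (f_equal (@proj1_sig _ _) E).
  - intros t t' Hle; apply (fix_le (thin_poset pT)), (jj_le_reflect D), (le_unfix Hle).
  - intros k l Hle; destruct (j_sieve D (le_unfix Hle)) as [k' E].
    exists (exist _ k' (fixed_j_preimage E)); apply sig_eq; exact E.
  - intros t l Hle; destruct (jj_cosieve D (le_unfix Hle)) as [t' E].
    exists (exist _ t' (fixed_jj_preimage E)); apply sig_eq; exact E.
Qed.
End FixedDwyer.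

Section FixedGlue.
Variables (G : Group) (H : G -> Prop) (K L X T : GCat G) (j : GFunctor K L) (f : GFunctor K X)
  (i : GFunctor K T) (jj : GFunctor T L) (r : GFunctor T K).
Hypotheses (pL : is_poset L) (pX : is_poset X) (pT : is_poset T) (D : poset_dwyer j i jj r).

Let DH := poset_dwyer_fix H pT D.
Let GlueH := GlueCat (fixF H f) DH.

Lemma notin_K_unfix (l : L ^^ H) : notin_K (fixF H j) l -> notin_K j (proj1_sig l).
Proof.
  intros Hl [k E]; apply Hl; exists (exist _ k (fixed_j_preimage D E)); apply sig_eq; exact E.
Qed.

Lemma notin_K_fix (l : L ^^ H) : notin_K j (proj1_sig l) -> notin_K (fixF H j) l.
Proof.
  intros Hl [k E]; apply Hl; exists (proj1_sig k); exact (f_equal (@proj1_sig _ _) E).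
Qed.

Definition glue_unfix_ob (a : glue_ob (X ^^ H) (fixF H j)) : glue_ob X j :=
  match a with
  | inl x => inl (proj1_sig x)
  | inr l => inr (exist _ (proj1_sig (proj1_sig l)) (notin_K_unfix (proj2_sig l)))
  end.

Lemma glue_unfix_ob_fixed a h : H h -> glue_act_ob h (glue_unfix_ob a) = glue_unfix_ob a.
Proof.
  destruct a as [x|[l Hl]]; simpl; intro Hh; f_equal.
  - exact (proj2_sig x h Hh).
  - apply sig_eq; exact (proj2_sig l h Hh).
Qed.

Lemma glue_unfix_mono a b :
  glue_le (fixF H f) (fixF H jj) (fixF H r) a b ->
  glue_le f jj r (glue_unfix_ob a) (glue_unfix_ob b).
Proof.
  destruct a as [x|[l Hl]], b as [y|[l' Hl']]; simpl; try tauto; try apply le_unfix.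
  intros [t [Et Ht]]; exists (proj1_sig t); split.
  - exact (f_equal (@proj1_sig _ _) Et).
  - exact (le_unfix Ht).
Qed.

Definition glue_fix_iso_ob (a : GlueH) : GlueG f D ^^ H :=
  exist _ (glue_unfix_ob a) (@glue_unfix_ob_fixed a).

Definition glue_fix_iso : Functor GlueH (GlueG f D ^^ H) :=
  thin_functor (thin_poset (fix_poset H (GlueG_poset f pL pX D)))
    glue_fix_iso_ob
    (fun a b m => @fix_hom_of G H (GlueG f D) (glue_thin f D)
                    (glue_fix_iso_ob a) (glue_fix_iso_ob b) (glue_unfix_mono m)).

Lemma act_inl_fixed h x : glue_act_ob h (inl x : glue_ob X j) = inl x -> act X h x = x.
Proof. intro E; injection E; trivial. Qed.

Lemma act_inr_fixed h (l : {l : L | notin_K j l}) :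
  glue_act_ob h (inr l : glue_ob X j) = inr l -> act L h (proj1_sig l) = proj1_sig l.
Proof.
  intro E; injection E; intro El; exact (f_equal (@proj1_sig _ _) El).
Qed.

Definition glue_refix_ob (a : glue_ob X j) :
    (forall h, H h -> glue_act_ob h a = a) -> glue_ob (X ^^ H) (fixF H j) :=
  match a with
  | inl x => fun Ha => inl (exist (fun y : X => forall h, H h -> act X h y = y) x
                                (fun h Hh => act_inl_fixed (Ha h Hh)))
  | inr l => fun Ha =>
      let lH : L ^^ H := exist (fun y : L => forall h, H h -> act L h y = y) (proj1_sig l)
                               (fun h Hh => act_inr_fixed (Ha h Hh)) in
      inr (exist _ lH (@notin_K_fix lH (proj2_sig l)))
  end.

Lemma glue_refix_mono a b Ha Hb :
  glue_le f jj r a b ->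
  glue_le (fixF H f) (fixF H jj) (fixF H r) (@glue_refix_ob a Ha) (@glue_refix_ob b Hb).
Proof.
  destruct a as [x|[l Hl]], b as [y|[l' Hl']]; simpl; try tauto.
  - intro Hle; apply (fix_le (thin_poset pX)); exact Hle.
  - intros [t [Et Ht]]; simpl in Et.
    pose (lH := exist (fun y : L => forall h, H h -> act L h y = y) l'
                  (fun h Hh => act_inr_fixed (Hb h Hh))).
    exists (exist _ t (fixed_jj_preimage D (l := lH) Et)); split.
    + apply sig_eq; exact Et.
    + apply (fix_le (thin_poset pX)); exact Ht.
  - intro Hle; apply (fix_le (thin_poset pL)); exact Hle.
Qed.

Definition glue_fix_iso_inv : Functor (GlueG f D ^^ H) GlueH :=
  thin_functor (glue_thin (fixF H f) DH)
    (fun a : GlueG f D ^^ H => glue_refix_ob (proj2_sig a))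
    (fun a b m => glue_refix_mono (proj2_sig a) (proj2_sig b) (proj1_sig m)).

Lemma glue_fix_iso_invK : feq (compF glue_fix_iso_inv glue_fix_iso) (idF GlueH).
Proof.
  apply feq_thin; [exact (glue_thin (fixF H f) DH)|].
  intros [[x px]|[[l pl] Hl]]; simpl; f_equal; apply sig_eq; [|apply sig_eq]; reflexivity.
Qed.

Lemma glue_fix_isoK : feq (compF glue_fix_iso glue_fix_iso_inv) (idF (GlueG f D ^^ H)).
Proof.
  apply (feq_fix (GlueG_poset f pL pX D)).
  intros [[x|[l Hl]] Ha]; simpl; f_equal; apply sig_eq; reflexivity.
Qed.

Lemma glue_fix_iso_L :
  feq (compF glue_fix_iso (glue_L (fixF H f) DH)) (fixF H (glue_LG f D)).
Proof.
  apply (feq_fix (GlueG_poset f pL pX D)); intro l; simpl.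
  destruct (glue_L_ob_cases (fixF H f) DH l) as [[k [<- ->]]|[Hl ->]]; simpl.
  - rewrite (glue_L_ob_j f D); reflexivity.
  - rewrite (glue_L_ob_notin f (notin_K_unfix Hl)); reflexivity.
Qed.

Lemma glue_fix_iso_X :
  feq (compF glue_fix_iso (glue_X (fixF H f) DH)) (fixF H (glue_XG f D)).
Proof. apply (feq_fix (GlueG_poset f pL pX D)); reflexivity. Qed.

Lemma fix_glue_pushout :
  is_pushout (fixF H j) (fixF H f) (fixF H (glue_LG f D)) (fixF H (glue_XG f D)).
Proof.
  apply (pushout_transfer glue_fix_iso_invK glue_fix_isoK glue_fix_iso_L glue_fix_iso_X).
  exact (glue_pushout (fixF H f) (fix_poset H pL) (fix_poset H pX) DH).
Qed.
End FixedGlue.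

Lemma dwyer_map_poset_dwyer (G : Group) (K L : GCat G) (j : GFunctor K L) :
  is_poset L -> dwyer_map j ->
  exists (T : GCat G) (i : GFunctor K T) (jj : GFunctor T L) (r : GFunctor T K),
    is_poset T /\ poset_dwyer j i jj r.
Proof.
  intros pL [[_ j_sv] [T [i [jj [r [eta Hdw]]]]]].
  destruct Hdw as [Ejj [[[jj_inj jj_arr_inj] jj_cos] [_ [[_ [eps _]] Eeta]]]].
  assert (pT : is_poset T).
  { split.
    - intros t t' m1 m2; apply mkArr_inj, jj_arr_inj.
      apply (mkArr_thin (thin_poset pL)); reflexivity.
    - intros t t' m1 m2; apply jj_inj; exact (proj2 pL _ _ (fm jj m1) (fm jj m2)). }
  exists T, i, jj, r; split; [exact pT|split].
  - exact (proj1 Ejj).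
  - intro k; exact (f_equal (fun a : Arr K => snd (projT1 a)) (Eeta k)).
  - intro t; exact (inhabits (eps t)).
  - exact jj_inj.
  - intros t t' [m]; destruct (jj_cos t (jj t') m) as [t'' [m' E]].
    apply (f_equal (fun a : Arr L => snd (projT1 a))), jj_inj in E; simpl in E; subst t''.
    exact (inhabits m').
  - intros k l [m]; destruct (j_sv k l m) as [k' [m' E]]; exists k'.
    exact (f_equal (fun a : Arr L => fst (projT1 a)) E).
  - intros t l [m]; destruct (jj_cos t l m) as [t' [m' E]]; exists t'.
    exact (f_equal (fun a : Arr L => snd (projT1 a)) E).
Qed.

Theorem lemma4p8 (G : Group) (K L X Y : GCat G)
    (j : GFunctor K L) (f : GFunctor K X) (iL : GFunctor L Y) (iX : GFunctor X Y) :
  is_poset K -> is_poset L -> is_poset X ->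
  dwyer_map j ->
  is_Gpushout j f iL iX ->
  is_poset Y /\
  forall H : G -> Prop, is_subgroup H ->
    is_pushout (fixF H j) (fixF H f) (fixF H iL) (fixF H iX).
Proof.
  intros _ pL pX Hdw HY.
  destruct (dwyer_map_poset_dwyer pL Hdw) as [T [i [jj [r [pT D]]]]].
  destruct (Gpushout_iso (glue_Gpushout f pL pX D) HY)
    as [phi [psi [Epsi [Ephi [Eu Ev]]]]].
  assert (pY : is_poset Y) by exact (poset_retract Ephi (GlueG_poset f pL pX D)).
  split; [exact pY|].
  intros H _.
  exact (fix_pushout_transfer (GlueG_poset f pL pX D) pY Epsi Ephi Eu Ev
           (fix_glue_pushout H f pL pX pT D)).
Qed.
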